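(* Let $f\in\mathcal{F}_k$. For all $p\in\Delta_\mathcal{Y}$ and $r\in\mathcal{Y}$, $\Gamma(p\odot r)=\Gamma(p)\odot r$, where $\Gamma(q)=\arg\min_{u\in\mathbb{R}^k}\sum_{y\in\mathcal{Y}}q_yL^f(u,y)$ and $p\odot r\in\Delta_\mathcal{Y}$ is defined by $(p\odot r)_y=p_{y\odot r}$.
   Context: $[k]=\{1,\dots,k\}$, $\mathcal{Y}=\{-1,1\}^k$, $\Delta_\mathcal{Y}$ the distributions on $\mathcal{Y}$; $u\odot u'$ entrywise product (extended to sets elementwise), $\mathbbm{1}$ all-ones, $(x)_+$ entrywise positive part. $\mathcal{F}_k$: submodular, increasing, normalized set functions $f:2^{[k]}\to\mathbb{R}$. Lovász extension $F(x)=\max_\pi\sum_{i=1}^kx_{\pi_i}(f(\{\pi_1,..,\pi_i\})-f(\{\pi_1,..,\pi_{i-1}\}))$ for $x\in\mathbb{R}^k_+$; Lovász hinge $L^f(u,y)=F((\mathbbm{1}-u\odot y)_+)$. *)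

From HB Require Import structures.
From mathcomp Require Import all_boot all_order all_algebra all_fingroup.
From mathcomp Require Import reals.
Set Implicit Arguments. Unset Strict Implicit. Unset Printing Implicit Defensive.
Import Order.TTheory GRing.Theory Num.Theory.
Local Open Scope ring_scope.

(* Label space Y = {-1,1}^k, encoded as boolean vectors: true <-> 1, false <-> -1. *)
Definition Ylab (k : nat) := {ffun 'I_k -> bool}.

Definition sgn {R : ringType} (b : bool) : R := if b then 1 else -1.

Definition yvec {R : ringType} k (y : Ylab k) : 'rV[R]_k := \row_i sgn (y i).

(* Entrywise product on labels: sgn a * sgn b = sgn (a == b). *)
Definition ymul k (y r : Ylab k) : Ylab k := [ffun i => y i == r i].

Definition vmul {R : ringType} k (u v : 'rV[R]_k) : 'rV[R]_k :=
  \row_i (u ord0 i * v ord0 i).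

Definition is_distr {R : numDomainType} k (p : {ffun Ylab k -> R}) :=
  (forall y, 0 <= p y) /\ \sum_y p y = 1.

Definition pmul {R : ringType} k (p : {ffun Ylab k -> R}) (r : Ylab k)
  : {ffun Ylab k -> R} := [ffun y => p (ymul y r)].

Definition submodular {R : numDomainType} k (f : {set 'I_k} -> R) :=
  forall A B : {set 'I_k}, f (A :|: B) + f (A :&: B) <= f A + f B.
Definition increasing {R : numDomainType} k (f : {set 'I_k} -> R) :=
  forall A B : {set 'I_k}, A \subset B -> f A <= f B.
Definition normalized {R : numDomainType} k (f : {set 'I_k} -> R) :=
  f set0 = 0.
Definition in_Fk {R : numDomainType} k (f : {set 'I_k} -> R) :=
  [/\ submodular f, increasing f & normalized f].

(* {pi_1, ..., pi_i} for the permutation s (0-based: images of j < i). *)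
Definition prefix k (s : 'S_k) (i : nat) : {set 'I_k} :=
  [set s j | j : 'I_k & (j < i)%N].

(* Only ever applied to x in R^k_+, where (f increasing, normalized) every
   candidate is >= 0, so using 0 as the neutral element of max is harmless. *)
Definition lovasz {R : realDomainType} k (f : {set 'I_k} -> R) (x : 'rV[R]_k) : R :=
  \big[Num.max/0]_(s : 'S_k)
     \sum_(i < k) x ord0 (s i) * (f (prefix s i.+1) - f (prefix s i)).

Definition lovasz_hinge {R : realDomainType} k (f : {set 'I_k} -> R)
  (u : 'rV[R]_k) (y : Ylab k) : R :=
  lovasz f (\row_i Num.max (1 - u ord0 i * sgn (y i)) 0).

Definition risk {R : realDomainType} k (f : {set 'I_k} -> R)
  (q : {ffun Ylab k -> R}) (u : 'rV[R]_k) : R :=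
  \sum_y q y * lovasz_hinge f u y.

Definition Gamma {R : realDomainType} k (f : {set 'I_k} -> R)
  (q : {ffun Ylab k -> R}) (u : 'rV[R]_k) : Prop :=
  forall v : 'rV[R]_k, risk f q u <= risk f q v.

From HB Require Import structures.
From mathcomp Require Import all_boot all_order all_algebra all_fingroup.
From mathcomp Require Import reals.
Set Implicit Arguments.
Unset Strict Implicit.
Unset Printing Implicit Defensive.
Import Order.TTheory GRing.Theory Num.Theory.
Local Open Scope ring_scope.

(* Flipping the signs selected by r, simultaneously on the score vector u and
   on the label y, leaves every margin u_i y_i and hence the Lovász hinge
   unchanged.  The flip is an involution on labels, so the risk under p ⊙ r of
   the flipped score equals the risk under p of the original one, and the two
   argmin sets correspond under the flip. *)

Lemma ymulK k (r : Ylab k) : involutive (fun y => ymul y r).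
Proof. by move=> y; apply/ffunP => i; rewrite !ffunE; case: (y i) (r i) => -[]. Qed.

Lemma sgn_eq (R : nzRingType) (a b : bool) : sgn (a == b) = sgn a * sgn b :> R.
Proof. by case: a b => -[]; rewrite /sgn ?mulrNN ?mulrN ?mulNr ?mulr1. Qed.

Lemma sgn_mulss (R : nzRingType) (b : bool) : sgn b * sgn b = 1 :> R.
Proof. by rewrite -sgn_eq eqxx. Qed.

Lemma vmul_yvecK (R : nzRingType) k (r : Ylab k) :
  involutive (fun v : 'rV[R]_k => vmul v (yvec r)).
Proof. by move=> v; apply/rowP => i; rewrite !mxE -mulrA sgn_mulss mulr1. Qed.

Lemma lovasz_hinge_reflect (R : realDomainType) k (f : {set 'I_k} -> R)
    (r y : Ylab k) (v : 'rV[R]_k) :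
  lovasz_hinge f (vmul v (yvec r)) (ymul y r) = lovasz_hinge f v y.
Proof.
rewrite /lovasz_hinge; congr lovasz; apply/rowP => i; rewrite !mxE ffunE sgn_eq.
by rewrite mulrACA [sgn (r i) * _]mulrC -mulrA sgn_mulss mulr1.
Qed.

Lemma risk_reflect (R : realDomainType) k (f : {set 'I_k} -> R)
    (p : {ffun Ylab k -> R}) (r : Ylab k) (v : 'rV[R]_k) :
  risk f (pmul p r) (vmul v (yvec r)) = risk f p v.
Proof.
rewrite /risk (reindex_inj (inv_inj (ymulK r))) /=.
by apply: eq_bigr => y _; rewrite lovasz_hinge_reflect ffunE ymulK.
Qed.

Lemma Gamma_reflect (R : realDomainType) k (f : {set 'I_k} -> R)
    (p : {ffun Ylab k -> R}) (r : Ylab k) (v : 'rV[R]_k) :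
  Gamma f (pmul p r) (vmul v (yvec r)) <-> Gamma f p v.
Proof.
split=> opt w; last by rewrite -(vmul_yvecK r w) !risk_reflect.
by rewrite -(risk_reflect f p r) -[X in _ <= X](risk_reflect f p r).
Qed.

Theorem lemma7 (R : realType) (k : nat) (f : {set 'I_k} -> R) (hf : in_Fk f)
  (p : {ffun Ylab k -> R}) (hp : is_distr p) (r : Ylab k) :
  forall u : 'rV[R]_k,
    Gamma f (pmul p r) u <->
    exists2 v : 'rV[R]_k, Gamma f p v & u = vmul v (yvec r).
Proof.
move=> u; split=> [opt_u | [v opt_v ->]]; last exact/Gamma_reflect.
exists (vmul u (yvec r)); last by rewrite vmul_yvecK.
by apply/(Gamma_reflect _ _ r); rewrite vmul_yvecK.
Qed.
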